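(* Let $\mathcal{L}_Q$ be a lattice liability network over a finite quiver $Q=(V,E,s,t)$, with payment lattices $L_v$, nominal liabilities $\ell_e$, pay-in aggregators $A_v$, distributors $D_v$ and pay-out aggregators $B_v$. Then the set of clearing sections of $\mathcal{L}_Q$ is nonempty and forms a complete lattice under the product order of $C^0=\prod_{v\in V}L_v$.
   Context: A quiver $Q=(V,E,s,t)$ consists of a vertex set $V$, an edge set $E$, and source and target maps $s,t:E\to V$ (multiple edges and self-loops are allowed); $t^{-1}(v)$ is the set of edges into $v$ and $s^{-1}(v)$ the set of edges out of $v$. A lattice liability network $\mathcal{L}_Q$ over a finite quiver $Q$ consists of: (1) for each $v\in V$ a complete lattice $L_v$ (the payment lattice), with top element $\top_v$; (2) for each $e\in E$ a nominal liability $\ell_e\in L_{s(e)}$; (3) for each $v$ a pay-in aggregator $A_v:\prod_{e\in t^{-1}(v)}L_{s(e)}\to L_v$, monotone in each coordinate; (4) for each $v$ a monotone distributor $D_v:L_v\to L_v^{s^{-1}(v)}$ and a monotone pay-out aggregator $B_v:L_v^{s^{-1}(v)}\to L_v$ with $B_v\circ D_v=\mathrm{id}_{L_v}$ and $[D_v(\top_v)]_e\le \ell_e$ for each $e\in s^{-1}(v)$. Let $C^0=\prod_{v\in V}L_v$ with the product order. For $\mathbf{x}=(x_v)\in C^0$ and $e\in E$, the edge payment is $p_e=[D_{s(e)}(x_{s(e)})]_e$. A clearing section is $\mathbf{x}\in C^0$ such that $x_v=A_v\big((p_e)_{e\in t^{-1}(v)}\big)$ for every $v\in V$. *)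

From mathcomp Require Import all_boot.
Set Implicit Arguments. Unset Strict Implicit. Unset Printing Implicit Defensive.

Record complete_lattice (T : Type) := CompleteLattice {
  cl_le : T -> T -> Prop;
  cl_refl : forall x, cl_le x x;
  cl_trans : forall x y z, cl_le x y -> cl_le y z -> cl_le x z;
  cl_antisym : forall x y, cl_le x y -> cl_le y x -> x = y;
  cl_sup : (T -> Prop) -> T;
  cl_sup_ub : forall (S : T -> Prop) x, S x -> cl_le x (cl_sup S);
  cl_sup_least : forall (S : T -> Prop) y,
      (forall x, S x -> cl_le x y) -> cl_le (cl_sup S) y }.

Definition cl_top T (L : complete_lattice T) : T := cl_sup L (fun _ => True).

Definition is_lub_in X (le : X -> X -> Prop) (P S : X -> Prop) (x : X) :=
  P x /\ (forall y, S y -> le y x) /\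
  (forall z, P z -> (forall y, S y -> le y z) -> le x z).
Definition is_glb_in X (le : X -> X -> Prop) (P S : X -> Prop) (x : X) :=
  P x /\ (forall y, S y -> le x y) /\
  (forall z, P z -> (forall y, S y -> le z y) -> le z x).

Definition prod_le I (L : I -> Type) (CL : forall i, complete_lattice (L i))
  (x y : forall i, L i) : Prop := forall i, cl_le (CL i) (x i) (y i).

Definition monotone T U (CT : complete_lattice T) (CU : complete_lattice U)
  (f : T -> U) := forall x y, cl_le CT x y -> cl_le CU (f x) (f y).

Definition coord_monotone I (L : I -> Type) (CL : forall i, complete_lattice (L i))
  U (CU : complete_lattice U) (f : (forall i, L i) -> U) :=
  forall (i0 : I) (x y : forall i, L i),
    (forall i, i <> i0 -> x i = y i) -> cl_le (CL i0) (x i0) (y i0) ->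
    cl_le CU (f x) (f y).

Definition prod_monotone I (L : I -> Type) (CL : forall i, complete_lattice (L i))
  U (CU : complete_lattice U) (f : (forall i, L i) -> U) :=
  forall x y : forall i, L i, prod_le CL x y -> cl_le CU (f x) (f y).

Section Network.
Variables (V E : finType) (s t : E -> V) (L : V -> Type)
  (D : forall v, L v -> forall e : {e : E | s e = v}, L v)
  (A : forall v, (forall e : {e : E | t e = v}, L (s (sval e))) -> L v).

Definition edge_payment (x : forall v, L v) (e : E) : L (s e) :=
  D (x (s e)) (exist (fun e' => s e' = s e) e erefl).

Definition clearing_section (x : forall v, L v) : Prop :=
  forall v, x v = A (fun e : {e : E | t e = v} => edge_payment x (sval e)).
End Network.

(** A vector x of C^0 is a clearing section exactly when it is a fixed point of
    the clearing map x |-> (A_v((p_e)_{e in t^-1(v)}))_v. This map is monotone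
    on the complete lattice C^0: the distributors are monotone, and each A_v,
    monotone in every coordinate separately, is monotone for the product order
    because v has only finitely many incoming edges. By Knaster-Tarski the
    fixed points form a nonempty complete lattice. *)
From mathcomp Require Import all_boot.
From Stdlib Require Import FunctionalExtensionality PropExtensionality.
From Stdlib Require List.
Set Implicit Arguments. Unset Strict Implicit. Unset Printing Implicit Defensive.

Definition cl_inf T (C : complete_lattice T) (S : T -> Prop) : T :=
  cl_sup C (fun z => forall y, S y -> cl_le C z y).

Lemma cl_inf_lb T (C : complete_lattice T) (S : T -> Prop) y :
  S y -> cl_le C (cl_inf C S) y.
Proof. by move=> Sy; apply: cl_sup_least => z; apply. Qed.

Lemma cl_inf_greatest T (C : complete_lattice T) (S : T -> Prop) z :
  (forall y, S y -> cl_le C z y) -> cl_le C z (cl_inf C S).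
Proof. exact: cl_sup_ub. Qed.

Definition dual_complete_lattice T (C : complete_lattice T) : complete_lattice T :=
  @CompleteLattice T (fun x y => cl_le C y x) (cl_refl C)
    (fun x y z le_yx le_zy => cl_trans le_zy le_yx)
    (fun x y le_yx le_xy => cl_antisym le_xy le_yx)
    (cl_inf C) (@cl_inf_lb T C) (@cl_inf_greatest T C).

Definition prod_complete_lattice I (L : I -> Type)
    (CL : forall i, complete_lattice (L i)) : complete_lattice (forall i, L i).
Proof.
refine (@CompleteLattice _ (prod_le CL) _ _ _
  (fun S i => cl_sup (CL i) (fun a => exists2 x, S x & x i = a)) _ _).
- by move=> x i; apply: cl_refl.
- by move=> x y z le_xy le_yz i; apply: cl_trans (le_xy i) (le_yz i).
- by move=> x y le_xy le_yx; apply: functional_extensionality_dep => i;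
    apply: cl_antisym.
- by move=> S x Sx i; apply: cl_sup_ub; exists x.
- by move=> S y ub_y i; apply: cl_sup_least => _ [x Sx <-]; apply: ub_y.
Defined.

Section KnasterTarski.
Variables (T : Type) (C : complete_lattice T) (F : T -> T).
Hypothesis F_mono : monotone C C F.

(* The least fixed point above S is the infimum of the pre-fixed upper bounds of S. *)
Lemma fixpoint_lub (S : T -> Prop) : (forall y, S y -> cl_le C y (F y)) ->
  exists u, is_lub_in (cl_le C) (fun x => F x = x) S u.
Proof.
move=> S_post.
pose P z := cl_le C (F z) z /\ forall y, S y -> cl_le C y z.
pose u := cl_inf C P.
have u_ub y : S y -> cl_le C y u.
  by move=> Sy; apply: cl_inf_greatest => z [_]; apply.
have Fu_le_u : cl_le C (F u) u.
  apply: cl_inf_greatest => z [Fz_le_z S_le_z]; apply: (cl_trans _ Fz_le_z).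
  by apply: F_mono; apply: cl_inf_lb.
have u_le_Fu : cl_le C u (F u).
  apply: cl_inf_lb; split; first exact: F_mono.
  by move=> y Sy; apply: cl_trans (S_post y Sy) (F_mono (u_ub y Sy)).
exists u; split; first exact: cl_antisym Fu_le_u u_le_Fu.
split=> // z Fz S_le_z; apply: cl_inf_lb; split=> //.
by rewrite Fz; apply: cl_refl.
Qed.

End KnasterTarski.

Lemma fixpoint_glb T (C : complete_lattice T) (F : T -> T) (S : T -> Prop) :
  monotone C C F -> (forall y, S y -> cl_le C (F y) y) ->
  exists u, is_glb_in (cl_le C) (fun x => F x = x) S u.
Proof.
move=> F_mono S_pre.
have dual_mono : monotone (dual_complete_lattice C) (dual_complete_lattice C) F.
  by move=> x y; apply: F_mono.
exact: fixpoint_lub dual_mono S S_pre.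
Qed.

Lemma prod_monotone_of_coord I (L : I -> Type) (CL : forall i, complete_lattice (L i))
    U (CU : complete_lattice U) (f : (forall i, L i) -> U) (l : list I) :
  (forall i j : I, {i = j} + {i <> j}) -> (forall i, List.In i l) ->
  coord_monotone CL CU f -> prod_monotone CL CU f.
Proof.
move=> I_eq_dec l_full f_mono x y le_xy.
pose mix k i := if List.in_dec I_eq_dec i k then y i else x i.
have mix_other k j i : i <> j -> mix k i = mix (j :: k) i.
  move=> ne_ij; rewrite /mix.
  case: (List.in_dec I_eq_dec i (j :: k)) => /= [[/esym //|in_k]|notin_jk].
    by case: (List.in_dec I_eq_dec i k).
  by case: (List.in_dec I_eq_dec i k) => // in_k; case: (notin_jk (or_intror in_k)).
have mix_head k j : mix (j :: k) j = y j.
  by rewrite /mix; case: List.in_dec => // -[]; left.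
have step k : cl_le CU (f x) (f (mix k)).
  elim: k => [|j k IH]; first exact: cl_refl.
  apply: (cl_trans IH); apply: (f_mono j) => [i /mix_other //|].
  by rewrite mix_head /mix; case: ifP => _; [apply: cl_refl | apply: le_xy].
have -> : y = mix l.
  apply: functional_extensionality_dep => i; rewrite /mix.
  by case: List.in_dec (l_full i).
exact: step.
Qed.

Lemma fiber_eq_dec (T U : eqType) (f : T -> U) (u : U) (x y : {x : T | f x = u}) :
  {x = y} + {x <> y}.
Proof.
case: x y => [x fx] [y fy]; case: (x =P y) => [eq_xy | ne_xy].
  by left; subst y; congr exist; apply: eq_irrelevance.
by right=> -[].
Qed.

Lemma fiber_listed (T : finType) (U : eqType) (f : T -> U) (u : U) :
  exists l : list {x : T | f x = u}, forall x, List.In x l.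
Proof.
pose in_fiber x : option {x | f x = u} :=
  if f x =P u is ReflectT fx then Some (exist _ x fx) else None.
exists (pmap in_fiber (enum T)) => -[x fx].
have : x \in enum T by rewrite mem_enum.
elim: (enum T) => //= y s IH; rewrite in_cons /in_fiber.
case/orP=> [/eqP <- | /IH x_in]; case: (f _ =P u) => //= fy.
  by left; congr exist; apply: eq_irrelevance.
by right.
Qed.

Section ClearingMap.
Variables (V E : finType) (s t : E -> V) (L : V -> Type).
Variables (D : forall v, L v -> forall e : {e : E | s e = v}, L v)
  (A : forall v, (forall e : {e : E | t e = v}, L (s (sval e))) -> L v).

Definition clearing_map (x : forall v, L v) : forall v, L v :=
  fun v => A (fun e : {e : E | t e = v} => edge_payment D x (sval e)).

Lemma clearing_sectionE : clearing_section D A = (fun x => clearing_map x = x).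
Proof.
apply: functional_extensionality => x; apply: propositional_extensionality.
split=> [x_clears | x_fixed v]; last by rewrite -{1}x_fixed.
by apply: functional_extensionality_dep => v; rewrite [RHS]x_clears.
Qed.

Variable CL : forall v, complete_lattice (L v).
Hypothesis A_mono : forall v,
  coord_monotone (fun e : {e : E | t e = v} => CL (s (sval e))) (CL v) (@A v).
Hypothesis D_mono : forall v (x y : L v), cl_le (CL v) x y ->
  forall e : {e : E | s e = v}, cl_le (CL v) (D x e) (D y e).

Lemma clearing_map_monotone :
  monotone (prod_complete_lattice CL) (prod_complete_lattice CL) clearing_map.
Proof.
move=> x y le_xy v; have [l l_full] := fiber_listed t v.
apply: (prod_monotone_of_coord (@fiber_eq_dec _ _ t v) l_full (@A_mono v)) => e.
exact: D_mono.
Qed.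

End ClearingMap.

Theorem theorem1
  (V E : finType) (s t : E -> V)
  (L : V -> Type) (CL : forall v, complete_lattice (L v))
  (ell : forall e : E, L (s e))
  (A : forall v, (forall e : {e : E | t e = v}, L (s (sval e))) -> L v)
  (D : forall v, L v -> forall e : {e : E | s e = v}, L v)
  (B : forall v, (forall e : {e : E | s e = v}, L v) -> L v)
  (hA : forall v, coord_monotone (fun e : {e : E | t e = v} => CL (s (sval e)))
                                 (CL v) (A v))
  (hD : forall v, forall x y : L v, cl_le (CL v) x y ->
          forall e : {e : E | s e = v}, cl_le (CL v) (D v x e) (D v y e))
  (hB : forall v, prod_monotone (fun _ : {e : E | s e = v} => CL v) (CL v) (B v))
  (hBD : forall v (x : L v), B v (D v x) = x)
  (hDtop : forall v (e : {e : E | s e = v}),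
      cl_le (CL v) (D v (cl_top (CL v)) e)
        (eq_rect_r (fun w => L w) (ell (sval e)) (esym (svalP e)))) :
  (exists x, clearing_section D A x) /\
  (forall S : (forall v, L v) -> Prop,
      (forall x, S x -> clearing_section D A x) ->
      (exists x, is_lub_in (prod_le CL) (clearing_section D A) S x) /\
      (exists x, is_glb_in (prod_le CL) (clearing_section D A) S x)).
Proof.
have mono := clearing_map_monotone hA hD.
have fixed_lattice S : (forall x, S x -> clearing_map D A x = x) ->
    (exists x, is_lub_in (prod_le CL) (fun x => clearing_map D A x = x) S x) /\
    (exists x, is_glb_in (prod_le CL) (fun x => clearing_map D A x = x) S x).
  move=> S_fixed.
  have S_le_F y : S y -> prod_le CL y (clearing_map D A y).
    by move/S_fixed ->; apply: (cl_refl (prod_complete_lattice CL)).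
  have F_le_S y : S y -> prod_le CL (clearing_map D A y) y.
    by move/S_fixed ->; apply: (cl_refl (prod_complete_lattice CL)).
  exact: (conj (fixpoint_lub mono S_le_F) (fixpoint_glb mono F_le_S)).
rewrite clearing_sectionE; split; last exact: fixed_lattice.
have [[x [x_fixed _]] _] := fixed_lattice (fun _ => False) (fun _ => False_ind _).
by exists x.
Qed.
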